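(* Let $L\in\mathbb N$, ${\bf A}\in\mathbb R^{M\times N}$, $\mathcal P_A={\bf A}^\dagger{\bf A}$, and let $\tilde{\bf x}^{(1)},\tilde{\bf x}^{(2)}:[0,\infty)\to\mathbb R^N$ be functions whose entries are all positive and bounded above and bounded away from zero, uniformly in $t$. Suppose $\lim_{t\to\infty}{\bf A}[\tilde{\bf x}^{(1)}(t)-\tilde{\bf x}^{(2)}(t)]=0$ and $$\begin{cases}\lim_{t\to\infty}(I-\mathcal P_A)[\log(\tilde{\bf x}^{(1)}(t))-\log(\tilde{\bf x}^{(2)}(t))]=0 & L=2,\\ \lim_{t\to\infty}(I-\mathcal P_A)[(\tilde{\bf x}^{(1)}(t))^{\odot(\frac2L-1)}-(\tilde{\bf x}^{(2)}(t))^{\odot(\frac2L-1)}]=0 & L\neq2.\end{cases}$$ Then $\lim_{t\to\infty}(\tilde{\bf x}^{(1)}(t)-\tilde{\bf x}^{(2)}(t))=0$.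
   Context: $\odot$ denotes entrywise power and $\log$ acts entrywise; ${\bf A}^\dagger$ is the Moore–Penrose pseudoinverse. *)

From HB Require Import structures.
From mathcomp Require Import all_boot all_order all_algebra.
From mathcomp Require Import all_classical all_reals all_analysis.
Set Implicit Arguments. Unset Strict Implicit. Unset Printing Implicit Defensive.
Import Order.TTheory GRing.Theory Num.Theory.
Local Open Scope ring_scope.

(* Moore-Penrose pseudoinverse: X is the pseudoinverse of A iff it satisfies
   the four Penrose conditions (which determine X uniquely). *)
Definition moore_penrose (R : realType) (M N : nat)
  (A : 'M[R]_(M, N)) (X : 'M[R]_(N, M)) : Prop :=
  [/\ A *m X *m A = A, X *m A *m X = X,
      (A *m X)^T = A *m X & (X *m A)^T = X *m A].

Definition vlog (R : realType) (N : nat) (v : 'cV[R]_N) : 'cV[R]_N :=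
  map_mx (@ln R) v.
Definition vpow (R : realType) (N : nat) (v : 'cV[R]_N) (p : R) : 'cV[R]_N :=
  map_mx (fun a => powR a p) v.

Definition unif_pos_bounded (R : realType) (N : nat) (x : R -> 'cV[R]_N) : Prop :=
  exists c C : R, 0 < c /\ forall t, 0 <= t -> forall i, c <= x t i ord0 <= C.

From HB Require Import structures.
From mathcomp Require Import all_boot all_order all_algebra.
From mathcomp Require Import all_classical all_reals all_analysis.
From mathcomp Require Import ring lra.
Import Order.TTheory GRing.Theory Num.Theory.
Import numFieldTopology.Exports numFieldNormedType.Exports.
Local Open Scope classical_set_scope.
Local Open Scope ring_scope.

(* Write d = x1 - x2 and P = A^+ A, the symmetric projection onto the row
   space of A.  Since P d = A^+ (A d), the first hypothesis gives P d -> 0.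
   Let g be ln (case L = 2) or x |-> p x^p with p = 2/L - 1 <> 0 (case
   L <> 2), and e = g(x1) - g(x2) entrywise; the second hypothesis gives
   (1 - P) e -> 0.  On a box [c, C] containing every entry, g' >= m > 0, so the
   mean value theorem yields m d_i^2 <= d_i e_i.  Summing over i and splitting
   the inner product along P and 1 - P,
       m d_j^2 <= <d, e> = <P d, e> + <d, (1 - P) e>,
   and both terms vanish at infinity since d and e stay bounded; so d -> 0. *)

Section vector_limits.
Context {R : realType} {T : Type} (F : set_system T) {FF : Filter F}.

Lemma cvg_sum0 (I : Type) (r : seq I) (f : I -> T -> R) :
  (forall i, f i x @[x --> F] --> 0) -> (\sum_(i <- r) f i x) @[x --> F] --> 0.
Proof.
move=> f0; rewrite -[X in _ --> X](@big1 R 0 +%R I r predT (fun=> 0)) //.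
by apply: cvg_big => //; exact: add_continuous.
Qed.

Lemma cvg0_entryP (N : nat) (f : T -> 'cV[R]_N) :
  f @ F --> (0 : 'cV[R]_N) <-> forall i, (fun x => f x i ord0) @ F --> 0.
Proof.
split=> [f0 i|f0].
  by have := cvg_comp _ _ f0 (@coord_continuous R N 1 i ord0 0); rewrite mxE.
apply: norm_cvg0.
have S : (\sum_i `|f x i ord0|) @[x --> F] --> 0.
  apply: cvg_sum0 => i; rewrite -(@normr0 _ R); exact: cvg_norm (f0 i).
apply: (squeeze_cvgr _ (cvg_cst 0) S); apply: filterE => x.
rewrite normr_ge0 /= [leLHS]/Num.Def.normr /= mx_normrE.
apply: bigmax_le => [|[i j] _]; first exact: sumr_ge0.
by rewrite /= (ord1 j) (bigD1 i) //= lerDl; exact: sumr_ge0.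
Qed.

Lemma cvg0_mulmx (M N : nat) (B : 'M[R]_(N, M)) (v : T -> 'cV[R]_M) :
  v @ F --> (0 : 'cV[R]_M) -> (fun x => B *m v x) @ F --> (0 : 'cV[R]_N).
Proof.
move=> /cvg0_entryP v0; apply/cvg0_entryP => i.
under eq_fun do rewrite mxE.
apply: cvg_sum0 => k; rewrite -(mulr0 (B i k)); exact: cvgMl_tmp.
Qed.

Lemma cvg0_sqr (f : T -> R) : (f x ^+ 2) @[x --> F] --> 0 -> f x @[x --> F] --> 0.
Proof.
move=> f20.
have abs0 : `|f x| @[x --> F] --> 0.
  have := cvg_comp _ _ f20 (@sqrt_continuous R 0).
  by rewrite sqrtr0; under eq_cvg do rewrite /= sqrtr_sqr.
have nabs0 : - `|f x| @[x --> F] --> 0 by rewrite -oppr0; exact: cvgN.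
by apply: (squeeze_cvgr _ nabs0 abs0); apply: filterE => x; rewrite -ler_norml.
Qed.

End vector_limits.

Section monotone_coupling.
Context {R : realType} {N : nat} {P : 'M[R]_N}.
Hypothesis P_sym : P^T = P.

Lemma dot_split (d e : 'cV[R]_N) :
  \sum_i d i ord0 * e i ord0 =
  \sum_i (P *m d) i ord0 * e i ord0 + \sum_i d i ord0 * ((1%:M - P) *m e) i ord0.
Proof.
have dotE (u v : 'cV[R]_N) : \sum_i u i ord0 * v i ord0 = (u^T *m v) ord0 ord0.
  by rewrite mxE; apply: eq_bigr => i _; rewrite mxE.
have split_e : e = P *m e + (1%:M - P) *m e by rewrite mulmxBl mul1mx addrC subrK.
rewrite !dotE trmx_mul P_sym -mulmxA {1}split_e mulmxDr.
by rewrite [LHS]mxE.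
Qed.

Lemma coupling_bound (d e : 'cV[R]_N) (m Bd Be : R) : 0 <= m ->
  (forall i, m * d i ord0 ^+ 2 <= d i ord0 * e i ord0) ->
  (forall i, `|d i ord0| <= Bd) -> (forall i, `|e i ord0| <= Be) ->
  forall j, m * d j ord0 ^+ 2 <=
    Be * \sum_i `|(P *m d) i ord0| + Bd * \sum_i `|((1%:M - P) *m e) i ord0|.
Proof.
move=> m_ge0 coupled d_le e_le j.
have sq_ge0 i : 0 <= m * d i ord0 ^+ 2 by rewrite mulr_ge0 ?sqr_ge0.
apply: (le_trans (y := \sum_i m * d i ord0 ^+ 2)).
  by rewrite (bigD1 j) //= lerDl; exact: sumr_ge0.
apply: (le_trans (ler_sum _ (fun i _ => coupled i))).
rewrite dot_split !mulr_sumr; apply: lerD; apply: ler_sum => i _;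
  apply: (le_trans (ler_norm _)); rewrite normrM.
- by rewrite mulrC ler_wpM2r.
- by rewrite ler_wpM2r.
Qed.

Lemma coupling_cvg (d e : R -> 'cV[R]_N) (m Bd Be : R) : 0 < m ->
  (forall t, 0 <= t -> forall i, m * d t i ord0 ^+ 2 <= d t i ord0 * e t i ord0) ->
  (forall t, 0 <= t -> forall i, `|d t i ord0| <= Bd) ->
  (forall t, 0 <= t -> forall i, `|e t i ord0| <= Be) ->
  (fun t => P *m d t) @ +oo --> (0 : 'cV[R]_N) ->
  (fun t => (1%:M - P) *m e t) @ +oo --> (0 : 'cV[R]_N) ->
  d @ +oo --> (0 : 'cV[R]_N).
Proof.
move=> m_gt0 coupled d_le e_le /cvg0_entryP Pd0 /cvg0_entryP Qe0.
apply/cvg0_entryP => j; apply: cvg0_sqr.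
pose bound t := m^-1 * (Be * \sum_i `|(P *m d t) i ord0| +
                        Bd * \sum_i `|((1%:M - P) *m e t) i ord0|).
have sum_abs0 (v : R -> 'cV[R]_N) :
    (forall i, (fun t => v t i ord0) @ +oo --> 0) ->
    (\sum_i `|v t i ord0|) @[t --> +oo] --> 0.
  move=> v0; apply: cvg_sum0 => i.
  by rewrite -(@normr0 _ R); exact: cvg_norm (v0 i).
have bound0 : bound t @[t --> +oo] --> 0.
  rewrite -(mulr0 m^-1) -[X in _ * X](addr0 0).
  rewrite -[X in _ * (X + _)](mulr0 Be) -[X in _ * (_ + X)](mulr0 Bd).
  by apply: cvgMl_tmp; apply: cvgD; apply: cvgMl_tmp; exact: sum_abs0.
apply: (squeeze_cvgr _ (cvg_cst 0) bound0); near=> t.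
have t_ge0 : 0 <= t by near: t; exists 0; split => // x /ltW.
rewrite sqr_ge0 /= /bound ler_pdivlMl //.
exact: coupling_bound (ltW m_gt0) (coupled t t_ge0) (d_le t t_ge0) (e_le t t_ge0) j.
Unshelve. all: end_near. Qed.

End monotone_coupling.

Section scalar_estimates.
Context {R : realType}.

Lemma strongly_monotone (g dg : R -> R) (c C m : R) : 0 < c ->
  (forall x : R, 0 < x -> is_derive x 1 g (dg x)) ->
  (forall x : R, c <= x <= C -> m <= dg x) ->
  forall a b, c <= a <= C -> c <= b <= C ->
  m * (a - b) ^+ 2 <= (a - b) * (g a - g b).
Proof.
move=> c_gt0 g_der dg_ge a b.
wlog ab : a b / a <= b.
  move=> wlog_ab ha hb; have [/wlog_ab|/ltW/wlog_ab] := leP a b; first exact.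
  by move=> /(_ hb ha); rewrite -(sqrrN (a - b)) -[X in _ <= X]mulrNN !opprB.
move=> /andP[ca aC] /andP[cb bC].
have [->|a_neq_b] := eqVneq a b; first by rewrite subrr expr0n mulr0 mul0r.
have a_lt_b : a < b by rewrite lt_neqAle a_neq_b ab.
have a_gt0 : 0 < a by exact: lt_le_trans ca.
have [x /[!in_itv] /= /andP[ax xb] mvt] :
    exists2 x, x \in `]a, b[ & g b - g a = dg x * (b - a).
  apply: MVT => // [x|].
    by rewrite in_itv /= => /andP[ax _]; apply: g_der; exact: lt_trans ax.
  apply: derivable_within_continuous => x /[!in_itv] /= /andP[ax _].
  by case: (g_der x (lt_le_trans a_gt0 ax)).
have -> : (a - b) * (g a - g b) = dg x * (a - b) ^+ 2.
  by rewrite -[g a - g b]opprB mvt; ring.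
rewrite ler_wpM2r ?sqr_ge0 // dg_ge //.
by rewrite (le_trans ca (ltW ax)) (le_trans (ltW xb) bC).
Qed.

Lemma ln_bound (c C x : R) : 0 < c -> c <= x <= C -> `|ln x| <= `|ln c| + `|ln C|.
Proof.
move=> c_gt0 /andP[cx xC].
have x_gt0 : 0 < x by exact: lt_le_trans cx.
have lnc_le : ln c <= ln x by rewrite ler_ln.
have lnC_ge : ln x <= ln C by rewrite ler_ln // posrE (lt_le_trans x_gt0 xC).
have := ler_norm (ln C); have := ler_norm (- ln c); rewrite normrN => ? ?.
have := normr_ge0 (ln c); have := normr_ge0 (ln C) => ? ?.
by rewrite ler_norml; apply/andP; split; lra.
Qed.

Lemma powR_bounds (c C x q : R) : 0 < c -> c <= x <= C ->
  expR (- (`|q| * (`|ln c| + `|ln C|))) <= x `^ q <= expR (`|q| * (`|ln c| + `|ln C|)).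
Proof.
move=> c_gt0 x_in; have x_gt0 : 0 < x by case/andP: x_in => cx _; exact: lt_le_trans cx.
rewrite /powR gt_eqF // !ler_expR -ler_norml normrM.
by rewrite ler_wpM2l // ln_bound.
Qed.

End scalar_estimates.

Section entrywise_transfer.
Context {R : realType} {N : nat} {P : 'M[R]_N} {x1 x2 : R -> 'cV[R]_N} {c C : R}.
Hypotheses (P_sym : P^T = P) (c_gt0 : 0 < c) (c_le_C : c <= C).
Hypothesis x1_box : forall t, 0 <= t -> forall i, c <= x1 t i ord0 <= C.
Hypothesis x2_box : forall t, 0 <= t -> forall i, c <= x2 t i ord0 <= C.
Hypothesis Pdiff0 : (fun t => P *m (x1 t - x2 t)) @ +oo --> (0 : 'cV[R]_N).

Lemma diff_bound t : 0 <= t -> forall i, `|(x1 t - x2 t) i ord0| <= C - c.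
Proof.
move=> t_ge0 i; rewrite !mxE ler_norml.
have /andP[? ?] := x1_box t t_ge0 i; have /andP[? ?] := x2_box t t_ge0 i.
by apply/andP; split; lra.
Qed.

Lemma transfer (g dg : R -> R) (m B : R) : 0 < m ->
  (forall x : R, 0 < x -> is_derive x 1 g (dg x)) ->
  (forall x : R, c <= x <= C -> m <= dg x) ->
  (forall x : R, c <= x <= C -> `|g x| <= B) ->
  (fun t => (1%:M - P) *m (map_mx g (x1 t) - map_mx g (x2 t))) @ +oo --> (0 : 'cV[R]_N) ->
  (fun t => x1 t - x2 t) @ +oo --> (0 : 'cV[R]_N).
Proof.
move=> m_gt0 g_der dg_ge g_le.
apply: (@coupling_cvg _ _ P P_sym _ _ m (C - c) (B + B) m_gt0 _ diff_bound) => //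
  t t_ge0 i.
- rewrite !mxE.
  exact: strongly_monotone c_gt0 g_der dg_ge _ _ (x1_box t t_ge0 i) (x2_box t t_ge0 i).
- rewrite !mxE; apply: (le_trans (ler_normB _ _)).
  by apply: lerD; apply: g_le; [exact: x1_box | exact: x2_box].
Qed.

(* Logarithmic case: ln' = 1/x >= 1/C on [c, C]. *)
Lemma ln_transfer :
  (fun t => (1%:M - P) *m (vlog (x1 t) - vlog (x2 t))) @ +oo --> (0 : 'cV[R]_N) ->
  (fun t => x1 t - x2 t) @ +oo --> (0 : 'cV[R]_N).
Proof.
have C_gt0 : 0 < C := lt_le_trans c_gt0 c_le_C.
apply: (transfer (@ln R) GRing.inv C^-1 (`|ln c| + `|ln C|) _
  (fun x x_gt0 => is_derive1_ln x_gt0)).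
- by rewrite invr_gt0.
- by move=> x /andP[cx xC]; rewrite lef_pV2 ?posrE // (lt_le_trans c_gt0 cx).
- by move=> x; exact: ln_bound.
Qed.

(* Power case, p != 0: for g x = p x^p, g' x = p^2 x^(p-1) is bounded below
   on [c, C] by a positive constant. *)
Lemma powR_transfer (p : R) : p != 0 ->
  (fun t => (1%:M - P) *m (vpow (x1 t) p - vpow (x2 t) p)) @ +oo --> (0 : 'cV[R]_N) ->
  (fun t => x1 t - x2 t) @ +oo --> (0 : 'cV[R]_N).
Proof.
move=> p_neq0 Qpow0.
pose K := `|ln c| + `|ln C|.
have g_der (x : R) :
    0 < x -> is_derive x 1 (fun y => p * y `^ p) (p * (p * x `^ (p - 1))).
  by move=> x_gt0; exact (is_deriveZ p (is_derive1_powR p x_gt0)).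
have g_map (x : 'cV[R]_N) : map_mx (fun y => p * y `^ p) x = p *: vpow x p.
  by apply/matrixP => i j; rewrite !mxE.
apply: (transfer (fun y => p * y `^ p) (fun x => p * (p * x `^ (p - 1)))
  (p ^+ 2 * expR (- (`|p - 1| * K))) (`|p| * expR (`|p| * K)) _ g_der).
- by rewrite mulr_gt0 ?expR_gt0 // exprn_even_gt0.
- move=> x x_in; rewrite mulrA -expr2 ler_wpM2l ?sqr_ge0 //.
  by case/andP: (powR_bounds _ _ _ (p - 1) c_gt0 x_in).
- move=> x x_in; rewrite normrM ler_wpM2l // ger0_norm ?powR_ge0 //.
  by case/andP: (powR_bounds _ _ _ p c_gt0 x_in).
- under eq_fun do rewrite !g_map -scalerBr -scalemxAr.
  by rewrite -(scaler0 _ p); exact: cvgZl_tmp.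
Qed.

End entrywise_transfer.

Lemma common_box {R : realType} {N : nat} {x1 x2 : R -> 'cV[R]_N} :
  unif_pos_bounded x1 -> unif_pos_bounded x2 ->
  exists c C : R, [/\ 0 < c, c <= C,
    forall t, 0 <= t -> forall i, c <= x1 t i ord0 <= C &
    forall t, 0 <= t -> forall i, c <= x2 t i ord0 <= C].
Proof.
move=> [c1 [C1 [c1_gt0 x1_in]]] [c2 [C2 [c2_gt0 x2_in]]].
exists (Num.min c1 c2), (Num.max (Num.max C1 C2) (Num.min c1 c2)); split.
- by rewrite lt_min c1_gt0 c2_gt0.
- by rewrite le_max lexx orbT.
- move=> t t_ge0 i; have /andP[lo hi] := x1_in t t_ge0 i.
  by rewrite ge_min lo !le_max hi.
- move=> t t_ge0 i; have /andP[lo hi] := x2_in t t_ge0 i.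
  by rewrite ge_min lo orbT !le_max hi orbT.
Qed.

Lemma exponent_neq0 {R : realType} (L : nat) : (1 <= L)%N -> L != 2%N ->
  2 / L%:R - 1 != 0 :> R.
Proof.
move=> L_ge1 L_neq2; have L_neq0 : L%:R != 0 :> R by rewrite pnatr_eq0 -lt0n.
rewrite subr_eq0; apply: contra L_neq2 => /eqP two_div_L.
by rewrite -(eqr_nat R) -[2%:R](divfK L_neq0) two_div_L mul1r.
Qed.

Theorem mainTheorem13 (R : realType) (L M N : nat) (A : 'M[R]_(M, N))
  (Adag : 'M[R]_(N, M)) (x1 x2 : R -> 'cV[R]_N) :
  (1 <= L)%N ->
  moore_penrose A Adag ->
  unif_pos_bounded x1 -> unif_pos_bounded x2 ->
  (fun t => A *m (x1 t - x2 t)) @ +oo --> (0 : 'cV[R]_M) ->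
  (if L == 2%N then
     (fun t => (1%:M - Adag *m A) *m (vlog (x1 t) - vlog (x2 t))) @ +oo
       --> (0 : 'cV[R]_N)
   else
     (fun t => (1%:M - Adag *m A) *m
        (vpow (x1 t) (2 / L%:R - 1) - vpow (x2 t) (2 / L%:R - 1))) @ +oo
       --> (0 : 'cV[R]_N)) ->
  (fun t => x1 t - x2 t) @ +oo --> (0 : 'cV[R]_N).
Proof.
move=> L_ge1 [_ _ _ proj_sym] x1_bdd x2_bdd Adiff0 complement0.
have [c [C [c_gt0 c_le_C x1_box x2_box]]] := common_box x1_bdd x2_bdd.
(* P (x1 - x2) = A^+ (A (x1 - x2)) vanishes together with A (x1 - x2). *)
have Pdiff0 : (fun t => Adag *m A *m (x1 t - x2 t)) @ +oo --> (0 : 'cV[R]_N).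
  by under eq_fun do rewrite -mulmxA; exact: cvg0_mulmx.
case: eqP complement0 => [_|L_neq2] complement0.
- exact: ln_transfer proj_sym c_gt0 c_le_C x1_box x2_box Pdiff0 complement0.
- apply: powR_transfer proj_sym c_gt0 x1_box x2_box Pdiff0 _ _ complement0.
  by apply: exponent_neq0 L_ge1 _; apply/eqP.
Qed.
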